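(* Let $N = n+1\ge 3$ and let $\Delta_N$ be the regular unimodular triangulation of $P_{C_N}$ described below. For each cell $T\in\Delta_N$, the associated directed acyclic subnetwork $(\{0,\dots,N-1\},\mathcal{E}(T))$ is primitive, i.e. $\mathcal{E}(T)$ contains exactly $n=N-1$ directed edges.
   Context: $C_N$ is the cycle graph on vertices $0,\dots,N-1$ with edges $\{0,1\},\dots,\{N-2,N-1\},\{N-1,0\}$; $\mathbf{e}_1,\dots,\mathbf{e}_n$ is the standard basis of $\mathbb{R}^n$ with $\mathbf{e}_0=\mathbf{e}_N=\mathbf{0}$; $P_{C_N}=\operatorname{conv}\{\mathbf{e}_i-\mathbf{e}_j\mid\{i,j\}\text{ an edge}\}$. If $N$ is even, let $\Lambda_N=\{\boldsymbol{\lambda}\in\{-1,1\}^N\mid\sum\lambda_i=0\}$, and for $\boldsymbol{\lambda}\in\Lambda_N$ let $\mathbf{v}_0=\mathbf{0}$, $\mathbf{v}_i=\lambda_i(\mathbf{e}_{i-1}-\mathbf{e}_i)$ ($1\le i\le N$), $V=\{\mathbf{v}_0,\dots,\mathbf{v}_N\}$; then $\Delta_N=\{\operatorname{conv}(V\setminus\{\mathbf{v}_i\})\mid\boldsymbol{\lambda}\in\Lambda_N,\ 1\le i\le N,\ \lambda_i=\lambda_1\}$. If $N$ is odd, let $\Lambda_{j,N}=\{\boldsymbol{\lambda}\mid\lambda_j=0,\ \lambda_i\in\{\pm1\}\ (i\ne j),\ \sum\lambda_i=0\}$ and $\Delta_N=\{\operatorname{conv}(\{\mathbf{0}\}\cup\{\lambda_i(\mathbf{e}_{i-1}-\mathbf{e}_i)\mid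 1\le i\le N,\ i\ne j\})\mid\boldsymbol{\lambda}\in\Lambda_{j,N},\ 1\le j\le N\}$. For a cell $T$, $\mathcal{E}(T)=\{(i,j)\mid\{i,j\}\text{ an edge of }C_N,\ \mathbf{e}_i-\mathbf{e}_j\in T\}$ (ordered pairs, i.e. directed edges), and the directed acyclic subnetwork associated with $T$ is the directed graph $(\{0,\dots,N-1\},\mathcal{E}(T))$; it is called primitive if it has exactly $n=N-1$ directed edges. *)

From HB Require Import structures.
From mathcomp Require Import all_boot all_order all_algebra.
Set Implicit Arguments. Unset Strict Implicit. Unset Printing Implicit Defensive.
Import Order.TTheory GRing.Theory Num.Theory.
Local Open Scope ring_scope.

(* e_k for k = 1..n is the k-th standard basis vector; e_0 = e_N = 0
   (indeed for k = 0 or k = n.+1 no coordinate j < n has j.+1 = k). *)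
Definition evec (R : nzRingType) (n k : nat) : 'rV[R]_n :=
  \row_(j < n) (if k == j.+1 then 1 else 0).

Definition cyc_adj (n : nat) (a b : 'I_n.+1) : bool :=
  ((val b == (val a).+1 %% n.+1) || (val a == (val b).+1 %% n.+1))%N.

Definition in_conv (R : realFieldType) (n : nat) (S : seq 'rV[R]_n)
  (p : 'rV[R]_n) : Prop :=
  exists w : 'I_(size S) -> R,
    [/\ forall i, 0 <= w i, \sum_i w i = 1 & \sum_i w i *: S`_i = p].

(* v_i = lambda_i (e_{i-1} - e_i), for i = 1..N; we index by k = i-1 : 'I_N,
   so v_(k+1) = lambda k (e_k - e_(k+1)). *)
Definition vvec (R : realFieldType) (n : nat) (lam : 'I_n.+1 -> int)
  (k : 'I_n.+1) : 'rV[R]_n :=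
  (lam k)%:~R *: (evec R n k - evec R n k.+1).

Definition cell_pts (R : realFieldType) (n : nat) (lam : 'I_n.+1 -> int)
  (i : 'I_n.+1) : seq 'rV[R]_n :=
  0 :: [seq vvec R lam k | k <- enum 'I_n.+1 & k != i].

(* S is the vertex list generating a cell of Delta_N, N = n.+1.
   Even N: lambda in {-1,1}^N with sum 0, remove v_i with lambda_i = lambda_1
   (lambda_1 is lam ord0). *)
Definition is_cell (R : realFieldType) (n : nat) (S : seq 'rV[R]_n) : Prop :=
  if ~~ odd n.+1 then
    exists (lam : 'I_n.+1 -> int) (i : 'I_n.+1),
      [/\ forall k, lam k = 1 \/ lam k = -1,
          \sum_k lam k = 0,
          lam i = lam ord0 &
          S = cell_pts R lam i]
  else
    exists (lam : 'I_n.+1 -> int) (j : 'I_n.+1),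
      [/\ lam j = 0,
          forall k, k != j -> lam k = 1 \/ lam k = -1,
          \sum_k lam k = 0 &
          S = cell_pts R lam j].

Definition dir_edge_of (R : realFieldType) (n : nat) (S : seq 'rV[R]_n)
  (p : 'I_n.+1 * 'I_n.+1) : Prop :=
  cyc_adj p.1 p.2 /\ in_conv S (evec R n p.1 - evec R n p.2).

From HB Require Import structures.
From mathcomp Require Import all_boot all_order all_algebra.
From mathcomp Require Import zify ring.
Import Order.TTheory GRing.Theory Num.Theory.
Local Open Scope ring_scope.
Set Implicit Arguments. Unset Strict Implicit. Unset Printing Implicit Defensive.

(* Write u_k = e_k - e_(k+1), so that the cell is T = conv({0} ∪ {λ_k u_k | k ≠ i})
   and the two orientations of the edge {k, k+1} of C_N have direction vectors
   ±u_k.  We show that ±u_k ∈ T exactly when k ≠ i and the sign is λ_k: the other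
   cases are cut off by a linear form, built from the coordinates with respect to
   the basis (u_k)_(k ≠ i), that is at most 1 (resp. 0) on the vertices of T but
   exceeds this bound at the candidate point.  Hence E(T) consists of
   the edges {k, k+1}, k ≠ i, each oriented by the sign of λ_k, and these n
   directed edges are distinct as soon as N ≥ 3.  Only the signs λ_k = ±1 for
   k ≠ i matter. *)

Lemma ordS_val N (k : 'I_N) : val (ordS k) = (if k.+1 == N then 0 else k.+1)%N.
Proof.
rewrite /=; case: eqP => [->|ne_kN]; first exact: modnn.
by rewrite modn_small // ltn_neqAle ltn_ord andbT; apply/eqP.
Qed.

Lemma ordS_ordS_neq N (k : 'I_N) : (2 < N)%N -> ordS (ordS k) != k.
Proof.
move=> gt2N; apply/eqP => /(congr1 val); rewrite !ordS_val.
by have := ltn_ord k; case: eqP; case: eqP => /=; lia.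
Qed.

Section ConvexHull.
Variables (R : realFieldType) (n : nat).

Lemma in_conv_mem (S : seq 'rV[R]_n) x : x \in S -> in_conv S x.
Proof.
rewrite -index_mem => ltxS; pose j0 := Ordinal ltxS.
exists (fun j => (j == j0)%:R); split=> [j||]; first exact: ler0n.
  by rewrite (bigD1 j0) //= big1 => [|j /negbTE ->]; rewrite ?eqxx ?addr0.
rewrite (bigD1 j0) //= big1 => [|j /negbTE ->]; last by rewrite scale0r.
by rewrite eqxx scale1r addr0 nth_index // -index_mem.
Qed.

Lemma in_conv_le (f : {scalar 'rV[R]_n}) (S : seq 'rV[R]_n) x a :
  in_conv S x -> {in S, forall y, f y <= a} -> f x <= a.
Proof.
move=> [w [w_ge0 w_sum1 <-]] le_fS_a.
rewrite linear_sum -[a]mul1r -w_sum1 mulr_suml ler_sum // => j _.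
by rewrite linearZ ler_wpM2l ?le_fS_a ?mem_nth.
Qed.

End ConvexHull.

Section LinearForm.
Variables (R : realFieldType) (n : nat).

Definition lform (c : nat -> R) (x : 'rV[R]_n) : R := \sum_(j < n) x 0 j * c j.+1.

Fact lform_is_linear c : linear_for *%R (lform c).
Proof.
move=> a x y; rewrite /lform mulr_sumr -big_split; apply: eq_bigr => j _.
by rewrite !mxE mulrDl mulrA.
Qed.

HB.instance Definition _ c :=
  GRing.isLinear.Build R 'rV[R]_n R *%R (lform c) (lform_is_linear c).

Lemma lform_evec c k : c 0%N = 0 -> c n.+1 = 0 -> (k <= n.+1)%N ->
  lform c (evec R n k) = c k.
Proof.
move=> c0 cN; case: k => [_|k le_kn]; rewrite /lform.
  by rewrite big1 // => j _; rewrite mxE mul0r.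
under eq_bigr => j _ do rewrite mxE eqSS eq_sym (fun_if (fun b => b * _)) mul1r mul0r.
rewrite -big_mkcond (big_ord1_eq _ (fun j => c j.+1)); case: ltnP => // le_nk.
by have -> : k = n by lia.
Qed.

End LinearForm.

Section CycleEdges.
Variables (R : realFieldType) (n : nat).

Lemma cyc_adjE (a b : 'I_n.+1) : cyc_adj a b = (b == ordS a) || (a == ordS b).
Proof. by []. Qed.

Definition uvec (k : nat) : 'rV[R]_n := evec R n k - evec R n k.+1.

Lemma evec_ordS (k : 'I_n.+1) : evec R n (ordS k) = evec R n k.+1.
Proof.
apply/rowP => j; rewrite !mxE ordS_val.
by have [->|//] := eqVneq k.+1 n.+1; rewrite eqSS (gtn_eqF (ltn_ord j)).
Qed.

Lemma lform_uvec c k : c 0%N = 0 -> c n.+1 = 0 -> (k <= n)%N ->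
  lform c (uvec k) = c k - c k.+1.
Proof. by move=> c0 cN le_kn; rewrite /uvec linearB /= !(lform_evec c0 cN) //; lia. Qed.

Lemma dir_edge_ofE (S : seq 'rV[R]_n) (a b : 'I_n.+1) :
  dir_edge_of S (a, b) <->
  b = ordS a /\ in_conv S (uvec a) \/ a = ordS b /\ in_conv S (- uvec b).
Proof.
rewrite /dir_edge_of cyc_adjE /= /uvec -!evec_ordS opprB.
split=> [[/orP[]/eqP-> S_ab] | [][-> S_ab]].
- by left.
- by right.
- by rewrite eqxx.
- by rewrite eqxx orbT.
Qed.

End CycleEdges.

Lemma natr_ltnS (R : numDomainType) (i k : nat) :
  (i < k.+1)%N%:R = (i < k)%N%:R + (i == k)%:R :> R.
Proof. by rewrite ltnS leq_eqVlt; case: ltngtP; rewrite ?addr0 ?add0r. Qed.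

Section CellEdges.
Variables (R : realFieldType) (n : nat) (lam : 'I_n.+1 -> int) (i : 'I_n.+1).
Hypothesis lam_sign : forall k, k != i -> lam k = 1 \/ lam k = -1.
Hypothesis ge2n : (2 <= n)%N.

Local Notation T := (cell_pts R lam i).

Lemma vvec_in_cell k : k != i -> vvec R lam k \in T.
Proof.
by move=> ki; rewrite inE; apply/orP; right; apply: map_f; rewrite mem_filter ki mem_enum.
Qed.

Lemma lform_cell_le c a x : c 0%N = 0 -> c n.+1 = 0 -> 0 <= a ->
  (forall k, k != i -> (lam k)%:~R * (c k - c k.+1) <= a) ->
  in_conv T x -> lform c x <= a.
Proof.
move=> c0 cN a_ge0 le_ca /in_conv_le; apply=> y; rewrite inE => /orP[/eqP->|].
  by rewrite linear0.
case/mapP=> k; rewrite mem_filter => /andP[ki _] ->.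
by rewrite /vvec linearZ /= -/(uvec R n k) (lform_uvec c0 cN (leq_ord k)) le_ca.
Qed.

Lemma removed_uvec_notin_cell s : s = 1 \/ s = -1 ->
  ~ in_conv T (s%:~R *: uvec R n i).
Proof.
move=> s_sign T_su.
(* c = - s Σ_(j ≠ i) φ_j, with φ_j the u_j-coordinate in the basis (u_k)_(k ≠ i);
   as s u_i = - s Σ_(k ≠ i) u_k, its value at s u_i is n. *)
pose c k : R := s%:~R * (k%:R - n.+1%:R * (i < k)%N%:R).
have c_step k : c k - c k.+1 = s%:~R * (n.+1%:R * (i == k :> nat)%:R - 1).
  by rewrite /c natr_ltnS; ring.
have c0 : c 0%N = 0 by rewrite /c ltn0 mulr0 subr0 mulr0.
have cN : c n.+1 = 0 by rewrite /c ltn_ord mulr1 subrr mulr0.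
have : lform c (s%:~R *: uvec R n i) <= 1.
  apply: (lform_cell_le c0 cN _ _ T_su) => // k ki.
  rewrite c_step val_eqE eq_sym (negbTE ki) mulr0 add0r mulrN1 mulrN.
  rewrite -intrM -intrN lerz1.
  by case: (lam_sign ki) => ->; case: s_sign => ->.
have ss : s * s = 1 by case: s_sign => ->.
rewrite linearZ /= (lform_uvec c0 cN (leq_ord i)) c_step eqxx mulr1 mulrA.
by rewrite -intrM ss mul1r -natr1 addrK lern1 leqNgt ge2n.
Qed.

Lemma uvec_in_cell_sign m s : m != i -> s = 1 \/ s = -1 ->
  in_conv T (s%:~R *: uvec R n m) -> s = lam m.
Proof.
move=> mi s_sign T_su; have [//|ne_s] := eqVneq s (lam m).
have s_opp : s = - lam m by case: (lam_sign mi) ne_s => ->; case: s_sign => ->.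
(* c = s φ_m, with φ_m the u_m-coordinate in the basis (u_k)_(k ≠ i). *)
pose c k : R := s%:~R * ((i < k)%N%:R - (m < k)%N%:R).
have c_step k : c k - c k.+1 = s%:~R * ((m == k :> nat)%:R - (i == k :> nat)%:R).
  by rewrite /c !natr_ltnS; ring.
have c0 : c 0%N = 0 by rewrite /c !ltn0 subrr mulr0.
have cN : c n.+1 = 0 by rewrite /c !ltn_ord subrr mulr0.
have : lform c (s%:~R *: uvec R n m) <= 0.
  apply: (lform_cell_le c0 cN _ _ T_su) => // k ki.
  rewrite c_step !val_eqE (eq_sym i) (negbTE ki) subr0.
  have [<-|_] := eqVneq m k; last by rewrite !mulr0.
  rewrite mulr1 -intrM lerz0 s_opp.
  by case: (lam_sign mi) => ->.
rewrite linearZ /= (lform_uvec c0 cN (leq_ord m)) c_step !val_eqE eqxx.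
rewrite (eq_sym i) (negbTE mi) subr0 mulr1 -intrM lerz0.
by case: s_sign => ->.
Qed.

Lemma in_conv_cell_uvec (m : 'I_n.+1) s : s = 1 \/ s = -1 ->
  in_conv T (s%:~R *: uvec R n m) <-> m != i /\ s = lam m.
Proof.
move=> s_sign; split=> [T_su | [mi ->]]; last exact/in_conv_mem/vvec_in_cell.
have mi : m != i by apply: contraPneq T_su => ->; exact: removed_uvec_notin_cell.
by split; last exact: uvec_in_cell_sign T_su.
Qed.

Definition orient (k : 'I_n.+1) := if lam k == 1 then (k, ordS k) else (ordS k, k).

Definition cell_edges : {set 'I_n.+1 * 'I_n.+1} := orient @: [set~ i].

Lemma orient_inj : injective orient.
Proof.
have ordS_2cycle (x y : 'I_n.+1) : x = ordS y -> ordS x = y -> False.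
  by move=> -> /eqP; apply/negP/ordS_ordS_neq.
move=> k l; rewrite /orient; case: ifP => _; case: ifP => _ [].
- by move=> ->.
- by move=> e1 e2; case: (ordS_2cycle _ _ e1 e2).
- by move=> e1 e2; case: (ordS_2cycle _ _ e2 e1).
- by move=> _ ->.
Qed.

Lemma card_cell_edges : #|cell_edges| = n.
Proof. by rewrite card_imset ?cardsC1 ?card_ord //; exact: orient_inj. Qed.

Lemma mem_cell_edges p : p \in cell_edges <-> dir_edge_of T p.
Proof.
case: p => a b; rewrite dir_edge_ofE; split.
  case/imsetP=> k; rewrite in_setC1 /orient => ki.
  have := proj2 (in_conv_cell_uvec k (lam_sign ki)) (conj ki erefl).
  case: (lam_sign ki) => ->; rewrite ?intrN ?scaleN1r ?scale1r /= => T_u [-> ->].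
    by left.
  by right.
case=> [[-> T_u] | [-> T_u]]; apply/imsetP.
  have [ai la] : a != i /\ 1 = lam a.
    by apply/in_conv_cell_uvec; [left | rewrite scale1r].
  by exists a; rewrite ?in_setC1 // /orient -la.
have [bi lb] : b != i /\ -1 = lam b.
  by apply/in_conv_cell_uvec; [right | rewrite intrN scaleN1r].
by exists b; rewrite ?in_setC1 // /orient -lb.
Qed.

Lemma cell_primitive :
  exists E : {set 'I_n.+1 * 'I_n.+1},
    (forall p, p \in E <-> dir_edge_of T p) /\ #|E| = n.
Proof. by exists cell_edges; split; [exact: mem_cell_edges | exact: card_cell_edges]. Qed.

End CellEdges.

Theorem proposition9p3 (R : realFieldType) (n : nat) (hn : (2 <= n)%N)
  (S : seq 'rV[R]_n) :
  is_cell S ->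
  exists E : {set 'I_n.+1 * 'I_n.+1},
    (forall p, p \in E <-> dir_edge_of S p) /\ #|E| = n.
Proof.
rewrite /is_cell; case: ifP => _ [lam [i]].
  by case=> lam_sign _ _ ->; apply: cell_primitive => // k _; exact: lam_sign.
by case=> _ lam_sign _ ->; exact: cell_primitive.
Qed.
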